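(* Let $F$ be a field, $4\le n<\infty$, and let $\varphi$ be an almost identity PC-map of $\mathrm{UT}(n,F)$. For $u=(u_1,\dots,u_{n-1})\in F^{n-1}$ (a row) put $a_u=\begin{pmatrix}1&u\\0&e_{n-1}\end{pmatrix}=e+\sum_{j=2}^{n}u_{j-1}e_{1j}$. Then there is a function $f:F^{n-1}\to F$ such that $\varphi(a_u)=a_u\,t_{1n}(f(u))$ for all $u$, and $f(u)=0$ whenever $u_1=u_2=0$.
   Context: $\mathrm{UT}(n,F)$ is the group of upper unitriangular $n\times n$ matrices over $F$; $e$ (or $e_m$) is the identity matrix, $e_{ij}$ the matrix unit, $t_{ij}(\alpha)=e+\alpha e_{ij}$ ($i<j$). $[x,y]=xyx^{-1}y^{-1}$. A PC-map is a bijection $\varphi$ of the group with $\varphi([x,y])=[\varphi(x),\varphi(y)]$ for all $x,y$; it is almost identity if $\varphi(t_{ij}(\alpha))=t_{ij}(\alpha)$ for all $i<j$, $\alpha\in F$. *)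

From HB Require Import structures.
From mathcomp Require Import all_boot all_order all_algebra.
Set Implicit Arguments. Unset Strict Implicit. Unset Printing Implicit Defensive.
Import GRing.Theory.
Local Open Scope ring_scope.

Definition unitri (F : fieldType) (n : nat) (x : 'M[F]_n) : Prop :=
  forall i j : 'I_n, ((j < i)%N -> x i j = 0) /\ (i = j -> x i j = 1).

Definition mxcomm (F : fieldType) (n : nat) (x y : 'M[F]_n) : 'M[F]_n :=
  x *m y *m invmx x *m invmx y.

Definition transv (F : fieldType) (n : nat) (i j : 'I_n) (a : F) : 'M[F]_n :=
  1%:M + a *: delta_mx i j.

(* PC-map of UT(n,F): phi restricted to UT(n,F) is a bijection of UT(n,F)
   preserving commutators (values of phi outside UT(n,F) are irrelevant) *)
Definition PCmap (F : fieldType) (n : nat) (phi : 'M[F]_n -> 'M[F]_n) : Prop :=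
  [/\ forall x, unitri x -> unitri (phi x),
      forall x y, unitri x -> unitri y -> phi x = phi y -> x = y,
      forall y, unitri y -> exists2 x, unitri x & phi x = y
    & forall x y, unitri x -> unitri y -> phi (mxcomm x y) = mxcomm (phi x) (phi y)].

Definition almost_identity (F : fieldType) (n : nat) (phi : 'M[F]_n -> 'M[F]_n) : Prop :=
  forall (i j : 'I_n) (a : F), (i < j)%N -> phi (transv i j a) = transv i j a.

Definition a_mx (F : fieldType) (m : nat) (u : 'rV[F]_m) : 'M[F]_(1 + m) :=
  block_mx 1%:M u 0 1%:M.

From HB Require Import structures.
From mathcomp Require Import all_boot all_order all_algebra.
Set Implicit Arguments. Unset Strict Implicit. Unset Printing Implicit Defensive.
Import GRing.Theory.
Local Open Scope ring_scope.

(* The matrices e + e_11 r with r_1 = 0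
   form an abelian group containing a_u and every t_1j(c), and phi fixes each
   t_1j.  As phi preserves commuting, phi(e + e_11 r) again commutes with all
   t_1j, which forces it to be of the form e + e_11 s; comparing the commutators
   with t_jn (1 < j < n), which phi fixes, gives s_j = r_j, so s = r + f(r) e_n.
   For the vanishing of f, take rows P, Q zero in columns 1..3 and let Z have
   rows P, Q in positions 2, 3: then e + Z commutes with every t_ij (i <= 3 < j),
   hence so does phi(e + Z) = e + W with W again supported in rows 1..3 and
   columns 4..n, and the commutators [e + e_11 v, e + Z] = e + e_11 vZ for
   v = e_2, e_3, e_2 + e_3 show f(P + Q) = f(P) + f(Q).  Since f(c e_j) = 0 for
   j >= 4 (phi fixes t_1j(c)), f vanishes on all such rows, in particular on
   (0, u) when u_1 = u_2 = 0. *)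

Lemma unipotent_commutator (R : pzRingType) (X Z : R) :
  X * X = 0 -> Z * Z = 0 -> Z * X = 0 -> (1 + X) * (1 + Z) * (1 - X) * (1 - Z) = 1 + X * Z.
Proof.
move=> X2 Z2 ZX.
have -> : (1 + X) * (1 + Z) * (1 - X) = 1 + Z + X * Z.
  rewrite mulrBr mulr1 !mulrDl !mul1r !mulrDr !mulr1 !mulrDl !mul1r -mulrA !ZX X2.
  by rewrite mulr0 !addr0 addrA addrAC addrK.
by rewrite mulrBr mulr1 !mulrDl mul1r -mulrA Z2 mulr0 !addr0 addrAC addrK.
Qed.

Section Matrices.

Variable F : fieldType.

Lemma mulmx_deltaE m n p (A : 'M[F]_(m, n)) (i : 'I_n) (j : 'I_p) a b :
  (A *m delta_mx i j) a b = A a i * (b == j)%:R.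
Proof.
rewrite mxE (bigD1 i) //= big1 ?addr0 => [|l /negPf nli]; rewrite !mxE ?nli ?eqxx //.
by rewrite mulr0.
Qed.

Lemma delta_mulmxE m n p (A : 'M[F]_(n, p)) (i : 'I_m) (j : 'I_n) a b :
  (delta_mx i j *m A) a b = (a == i)%:R * A j b.
Proof.
rewrite mxE (bigD1 j) //= big1 ?addr0 => [|l /negPf nlj]; rewrite !mxE ?nlj ?eqxx ?andbT ?andbF //.
by rewrite mul0r.
Qed.

Lemma mulmx1_invmx n (A B : 'M[F]_n) : A *m B = 1%:M -> invmx A = B.
Proof.
move=> AB1; have [uA _] := mulmx1_unit AB1.
by rewrite -[invmx A]mulmx1 -AB1 mulmxA mulVmx // mul1mx.
Qed.

Lemma unitri_unitmx n (x : 'M[F]_n) : unitri x -> x \in unitmx.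
Proof.
move=> ux; rewrite unitmxE -det_tr det_trig.
  by rewrite big1 ?unitr1 // => i _; rewrite mxE; case: (ux i i) => _ ->.
by apply/is_trig_mxP => i j ltij; rewrite mxE; case: (ux j i) => ->.
Qed.

Lemma mxcomm_eq1 n (x y : 'M[F]_n) : x \in unitmx -> y \in unitmx ->
  mxcomm x y = 1%:M <-> x *m y = y *m x.
Proof.
move=> ux uy; split=> [xy1|xy]; last by rewrite /mxcomm xy mulmxK // mulmxV.
by move: (congr1 (mulmx^~ (y *m x)) xy1); rewrite mul1mx /mxcomm !mulmxA !mulmxKV.
Qed.

Lemma unitri_transv n (i j : 'I_n) (c : F) : (i < j)%N -> unitri (transv i j c).
Proof.
move=> ltij p q; rewrite !mxE; split=> [ltqp|<-].
  have /negPf -> : p != q by rewrite neq_ltn ltqp orbT.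
  have /negPf -> : ~~ ((p == i) && (q == j)).
    apply/andP=> -[/eqP epi /eqP eqj].
    by move: ltij; rewrite -epi -eqj => /(ltn_trans ltqp); rewrite ltnn.
  by rewrite mulr0 addr0.
have /negPf -> : ~~ ((p == i) && (p == j)).
  by apply/andP=> -[/eqP epi /eqP epj]; move: ltij; rewrite -epi -epj ltnn.
by rewrite eqxx mulr0 addr0.
Qed.

Lemma commute_transv1E n (x : 'M[F]_n) a b :
  x *m transv a b 1 = transv a b 1 *m x ->
  forall p q, x p a * (q == b)%:R = (p == a)%:R * x b q.
Proof.
rewrite /transv mulmxDr mulmxDl mulmx1 mul1mx scale1r => /addrI /matrixP xd p q.
by rewrite -mulmx_deltaE -delta_mulmxE xd.
Qed.

Definition first_row_mx n (r : 'rV[F]_n.+1) : 'M[F]_n.+1 := 1%:M + delta_mx 0 0 *m r.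

Section FirstRow.

Variable n : nat.
Implicit Types r s : 'rV[F]_n.+1.

Lemma first_row_mxE r i j : first_row_mx r i j = (i == j)%:R + (i == 0)%:R * r 0 j.
Proof. by rewrite mxE delta_mulmxE mxE. Qed.

Lemma first_row_mx0 : first_row_mx 0 = 1%:M :> 'M[F]_n.+1.
Proof. by rewrite /first_row_mx mulmx0 addr0. Qed.

Lemma first_row_mx_inj : injective (@first_row_mx n).
Proof.
move=> r s /matrixP rs; apply/matrixP => i j; rewrite (ord1 i).
by move: (rs 0 j); rewrite !first_row_mxE eqxx !mul1r => /addrI.
Qed.

Lemma unitri_first_row_mx r : r 0 0 = 0 -> unitri (first_row_mx r).
Proof.
move=> r00 i j; rewrite first_row_mxE; split=> [ltji|<-].
  have /negPf -> : i != j by rewrite neq_ltn ltji orbT.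
  have /negPf -> : i != 0 by apply: contraTneq ltji => ->.
  by rewrite mul0r addr0.
by rewrite eqxx; case: (i =P 0) => [->|_]; rewrite ?r00 ?mulr0 ?mul0r addr0.
Qed.

Lemma row_mul_delta00 r : r 0 0 = 0 -> r *m (delta_mx 0 0 : 'cV_n.+1) = 0.
Proof.
by move=> r00; apply/matrixP => a b; rewrite mulmx_deltaE !ord1 r00 mxE mul0r.
Qed.

Lemma delta_row0 (j : 'I_n.+1) : j != 0 -> (delta_mx 0 j : 'rV[F]_n.+1) 0 0 = 0.
Proof. by move=> nzj; rewrite mxE eq_sym (negbTE nzj) andbF. Qed.

Lemma mul_first_row_mx r s :
  r 0 0 = 0 -> first_row_mx r *m first_row_mx s = first_row_mx (r + s).
Proof.
move=> r00; rewrite /first_row_mx mulmxDl mul1mx mulmxDr mulmx1 -mulmxA (mulmxA r).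
by rewrite row_mul_delta00 // mul0mx mulmx0 addr0 mulmxDr addrAC addrA.
Qed.

Lemma invmx_first_row_mx r : r 0 0 = 0 -> invmx (first_row_mx r) = first_row_mx (- r).
Proof.
by move=> r00; apply: mulmx1_invmx; rewrite mul_first_row_mx // subrr first_row_mx0.
Qed.

Lemma transv0_first_row_mx (j : 'I_n.+1) (c : F) :
  transv 0 j c = first_row_mx (c *: delta_mx 0 j).
Proof. by rewrite /transv /first_row_mx -scalemxAr mul_delta_mx. Qed.

Lemma first_row_mx_transv r (j : 'I_n.+1) (c : F) : r 0 0 = 0 ->
  first_row_mx r *m transv 0 j c = first_row_mx (r + c *: delta_mx 0 j).
Proof. by move=> r00; rewrite transv0_first_row_mx mul_first_row_mx. Qed.

Lemma mxcomm_first_row_mx r (Z : 'M[F]_n.+1) :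
  r 0 0 = 0 -> Z *m Z = 0 -> Z *m (delta_mx 0 0 : 'cV_n.+1) = 0 ->
  mxcomm (first_row_mx r) (1%:M + Z) = first_row_mx (r *m Z).
Proof.
move=> r00 Z2 Zc0.
have invZ : invmx (1%:M + Z) = 1%:M - Z.
  by apply: mulmx1_invmx; rewrite mulmxBr mulmx1 mulmxDl mul1mx Z2 addr0 addrK.
set X := (delta_mx 0 0 : 'cV_n.+1) *m r.
have X2 : X *m X = 0 by rewrite -mulmxA (mulmxA r) row_mul_delta00 // mul0mx mulmx0.
have ZX : Z *m X = 0 by rewrite mulmxA Zc0 mul0mx.
rewrite /mxcomm invZ invmx_first_row_mx // /first_row_mx mulmxN.
move: X2 Z2 ZX; rewrite !mulmxE !idmxE => X2 Z2 ZX.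
by rewrite unipotent_commutator // -mulmxE mulmxA.
Qed.

Lemma commute_transv0_first_row_mx (x : 'M[F]_n.+1) : unitri x ->
    (forall i, i != 0 -> x *m transv 0 i 1 = transv 0 i 1 *m x) ->
  x = first_row_mx (row 0 x - delta_mx 0 0).
Proof.
move=> ux xt; have x00 : x 0 0 = 1 by case: (ux 0 0) => _ ->.
apply/matrixP => i j; rewrite first_row_mxE !mxE.
case: (i =P 0) => [->|/eqP nzi]; first by rewrite mul1r eqxx /= eq_sym addrCA subrr addr0.
by move: (commute_transv1E (xt i nzi) 0 j); rewrite x00 !mul1r eqxx eq_sym mul0r addr0 => <-.
Qed.

End FirstRow.

Lemma mxcomm_first_row_transv n (r : 'rV[F]_n.+2) (j : 'I_n.+2) :
  r 0 0 = 0 -> j != ord_max ->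
  mxcomm (first_row_mx r) (transv j ord_max 1) = transv 0 ord_max (r 0 j).
Proof.
move=> r00 njm; rewrite transv0_first_row_mx /transv scale1r mxcomm_first_row_mx //.
- congr first_row_mx; apply/matrixP => a b.
  by rewrite mulmx_deltaE !mxE (ord1 a) eqxx mulr_natr mulrb.
- by rewrite mul_delta_mx_0 // eq_sym.
- by rewrite mul_delta_mx_0.
Qed.

End Matrices.

Definition first_row_defect (F : fieldType) n (phi : 'M[F]_n.+1 -> 'M[F]_n.+1)
    (r : 'rV[F]_n.+1) : F :=
  phi (first_row_mx r) 0 ord_max - r 0 ord_max.

Section PCmap.

Variables (F : fieldType) (n : nat) (phi : 'M[F]_n.+2 -> 'M[F]_n.+2).
Hypotheses (phiPC : PCmap phi) (phi_id : almost_identity phi).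
Implicit Types (r : 'rV[F]_n.+2) (x y : 'M[F]_n.+2).

Lemma PCmap1 : phi 1%:M = 1%:M.
Proof. by have := @phi_id ord0 ord_max 0 isT; rewrite /transv scale0r addr0. Qed.

Lemma PCmap_commute x y : unitri x -> unitri y ->
  x *m y = y *m x -> phi x *m phi y = phi y *m phi x.
Proof.
case: phiPC => phiU _ _ phiC ux uy xy.
apply/(mxcomm_eq1 (unitri_unitmx (phiU _ ux)) (unitri_unitmx (phiU _ uy))).
by rewrite -phiC // (mxcomm_eq1 (unitri_unitmx ux) (unitri_unitmx uy)).2 // PCmap1.
Qed.

Lemma first_row_defect_eq r c :
  phi (first_row_mx r) = first_row_mx (r + c *: delta_mx 0 ord_max) ->
  first_row_defect phi r = c.
Proof.
rewrite /first_row_defect => ->; rewrite first_row_mxE !mxE !eqxx mulr1 /=.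
by rewrite add0r mul1r addrAC subrr add0r.
Qed.

Lemma first_row_defect_fixed r :
  phi (first_row_mx r) = first_row_mx r -> first_row_defect phi r = 0.
Proof. by move=> phir; apply: first_row_defect_eq; rewrite scale0r addr0. Qed.

Lemma first_row_defect0 : first_row_defect phi 0 = 0.
Proof. by apply: first_row_defect_fixed; rewrite first_row_mx0 PCmap1. Qed.

Lemma PCmap_first_row_mx_shape r : r 0 0 = 0 ->
  phi (first_row_mx r) = first_row_mx (row 0 (phi (first_row_mx r)) - delta_mx 0 0).
Proof.
move=> r00; apply: commute_transv0_first_row_mx => [|i nzi].
  by case: phiPC => phiU _ _ _; apply/phiU/unitri_first_row_mx.
have lt0i : (@ord0 n.+1 < i)%N by rewrite lt0n.
have ei00 : (1 *: delta_mx 0 i : 'rV[F]_n.+2) 0 0 = 0 by rewrite mxE delta_row0 ?mulr0.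
rewrite -(phi_id 1 lt0i); apply: PCmap_commute.
- exact: unitri_first_row_mx.
- exact: unitri_transv.
- by rewrite transv0_first_row_mx !mul_first_row_mx // addrC.
Qed.

Lemma PCmap_first_row_mx r : r 0 0 = 0 ->
  phi (first_row_mx r) = first_row_mx (r + first_row_defect phi r *: delta_mx 0 ord_max).
Proof.
move=> r00; have xs := PCmap_first_row_mx_shape r00.
set x := phi (first_row_mx r) in xs *; set s := row 0 x - delta_mx 0 0 in xs.
have s00 : s 0 0 = 0.
  case: phiPC => phiU _ _ _; have [_ x00] := phiU _ (unitri_first_row_mx r00) 0 0.
  by rewrite !mxE x00 // eqxx subrr.
have s_r j : j != 0 -> j != ord_max -> s 0 j = r 0 j.
  move=> nz0 njm; have ltjm : (j < @ord_max n.+1)%N by rewrite ltn_neqAle njm -ltnS ltn_ord.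
  case: phiPC => _ _ _ phiC.
  move: (phiC _ _ (unitri_first_row_mx r00) (unitri_transv 1 ltjm)).
  rewrite mxcomm_first_row_transv // !phi_id // -/x xs mxcomm_first_row_transv //.
  by move/matrixP/(_ 0 ord_max); rewrite !mxE !eqxx /= !mulr1 => /addrI.
suff [c xc] : exists c, x = first_row_mx (r + c *: delta_mx 0 ord_max).
  by rewrite (first_row_defect_eq xc).
clearbody s; exists (s 0 ord_max - r 0 ord_max); rewrite xs; congr first_row_mx.
apply/matrixP => a j; rewrite (ord1 a) !mxE eqxx /=.
case: (j =P ord_max) => [->|/eqP njm]; first by rewrite mulr1 addrCA subrr addr0.
rewrite mulr0 addr0; case: (j =P 0) => [->|/eqP nz0]; first by rewrite s00 r00.
exact: s_r.
Qed.

End PCmap.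

(* In the paper's 1-based indexing: rows vanishing in columns 1..3, and matrices
   supported in rows 1..3 and columns 4..n. *)
Definition top_right_row (F : fieldType) k (r : 'rV[F]_k.+4) : Prop :=
  forall q : 'I_k.+4, (q <= 2)%N -> r 0 q = 0.

Definition top_right_block (F : fieldType) k (Z : 'M[F]_k.+4) : Prop :=
  forall p q : 'I_k.+4, (3 <= p)%N || (q <= 2)%N -> Z p q = 0.

Section TopRightBlock.

Variables (F : fieldType) (k : nat).
Implicit Types (Z W x : 'M[F]_k.+4).

Lemma mulmx_top_right Z W : top_right_block Z -> top_right_block W -> Z *m W = 0.
Proof.
move=> tZ tW; apply/matrixP => p q; rewrite !mxE big1 // => m _.
case: (leqP m 2) => m2; first by rewrite tZ ?mul0r // m2 orbT.
by rewrite tW ?mulr0 // m2.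
Qed.

Lemma top_right_block_col0 Z p : top_right_block Z -> Z p 0 = 0.
Proof. by move=> tZ; apply: tZ; apply/orP; right. Qed.

Lemma top_right_mul_delta0 Z : top_right_block Z -> Z *m (delta_mx 0 0 : 'cV_k.+4) = 0.
Proof.
by move=> tZ; apply/matrixP => p q; rewrite mulmx_deltaE top_right_block_col0 ?mul0r ?mxE.
Qed.

Lemma delta_max_mul_top_right Z :
  top_right_block Z -> (delta_mx 0 ord_max : 'rV_k.+4) *m Z = 0.
Proof. by move=> tZ; apply/matrixP => p q; rewrite delta_mulmxE tZ ?mulr0 ?mxE. Qed.

Lemma unitri_top_right Z : top_right_block Z -> unitri (1%:M + Z).
Proof.
move=> tZ; have Zqp (a b : 'I_k.+4) : (b <= a)%N -> Z a b = 0.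
  by move=> le_ba; apply: tZ; case: (leqP 3 a) => //= lt_a3; apply: leq_trans le_ba _.
move=> p q; rewrite !mxE; split=> [lt_qp|<-]; last by rewrite eqxx Zqp ?addr0.
have /negPf -> : p != q by rewrite neq_ltn lt_qp orbT.
by rewrite Zqp ?(ltnW lt_qp) // addr0.
Qed.

Lemma top_right_commute_transv Z (i j : 'I_k.+4) :
  top_right_block Z -> (i <= 2)%N -> (3 <= j)%N ->
  (1%:M + Z) *m transv i j 1 = transv i j 1 *m (1%:M + Z).
Proof.
move=> tZ i2 j3; have Zd : Z *m delta_mx i j = 0.
  by apply/matrixP => p q; rewrite mulmx_deltaE tZ ?mul0r ?mxE // i2 orbT.
have dZ : delta_mx i j *m Z = 0.
  by apply/matrixP => p q; rewrite delta_mulmxE tZ ?mulr0 ?mxE // j3.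
by rewrite /transv scale1r !mulmxDr !mulmxDl !mulmx1 !mul1mx Zd dZ !addr0 addrAC.
Qed.

Lemma commute_transv_top_right x : unitri x ->
    (forall i j : 'I_k.+4, (i <= 2)%N -> (3 <= j)%N ->
       x *m transv i j 1 = transv i j 1 *m x) ->
  top_right_block (x - 1%:M).
Proof.
move=> ux xt p q pq; rewrite !mxE.
have xii i : x i i = 1 by case: (ux i i) => _ ->.
case: (leqP 3 p) => [p3|lt_p3].
  move: (commute_transv1E (xt 0 p isT p3) 0 q).
  by rewrite xii mul1r eqxx mul1r eq_sym => <-; rewrite subrr.
have q2 : (q <= 2)%N by move: pq; rewrite leqNgt lt_p3.
have i33 : (3 <= @inord k.+3 3)%N by rewrite inordK.
move: (commute_transv1E (xt q (inord 3) q2 i33) p (inord 3)).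
by rewrite xii eqxx !mulr1 => ->; rewrite subrr.
Qed.

End TopRightBlock.

Section PCmapTopRight.

Variables (F : fieldType) (k : nat) (phi : 'M[F]_k.+4 -> 'M[F]_k.+4).
Hypotheses (phiPC : PCmap phi) (phi_id : almost_identity phi).
Implicit Types (r v P Q : 'rV[F]_k.+4) (Z : 'M[F]_k.+4).

Lemma PCmap_top_right Z : top_right_block Z -> top_right_block (phi (1%:M + Z) - 1%:M).
Proof.
move=> tZ; case: phiPC => phiU _ _ _.
apply: commute_transv_top_right => [|i j i2 j3]; first exact/phiU/unitri_top_right.
have lt_ij : (i < j)%N by apply: leq_ltn_trans i2 j3.
rewrite -(phi_id 1 lt_ij); apply: PCmap_commute => //.
- exact: unitri_top_right.
- exact: unitri_transv.
- exact: top_right_commute_transv.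
Qed.

Lemma PCmap_first_row_mul_top_right v Z : v 0 0 = 0 -> top_right_block Z ->
  phi (first_row_mx (v *m Z)) = first_row_mx (v *m (phi (1%:M + Z) - 1%:M)).
Proof.
move=> v00 tZ; have tW := PCmap_top_right tZ.
set W := phi (1%:M + Z) - 1%:M in tW *.
have phiZ : phi (1%:M + Z) = 1%:M + W by rewrite addrCA subrr addr0.
case: phiPC => _ _ _ phiC.
rewrite -mxcomm_first_row_mx ?mulmx_top_right ?top_right_mul_delta0 //.
rewrite phiC; last exact: unitri_top_right; last exact: unitri_first_row_mx.
have -> := PCmap_first_row_mx phiPC phi_id v00.
rewrite phiZ mxcomm_first_row_mx ?mulmx_top_right ?top_right_mul_delta0 //; last first.
  by rewrite !mxE v00 /= mulr0 addr0.
by rewrite mulmxDl -scalemxAl delta_max_mul_top_right // scaler0 addr0.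
Qed.

Lemma PCmap_top_right_row Z i : top_right_block Z -> i != 0 ->
  row i (phi (1%:M + Z) - 1%:M) = row i Z + first_row_defect phi (row i Z) *: delta_mx 0 ord_max.
Proof.
move=> tZ nzi; move: (PCmap_first_row_mul_top_right (delta_row0 F nzi) tZ).
rewrite -!rowE (PCmap_first_row_mx phiPC) // ?mxE ?top_right_block_col0 //.
by move/first_row_mx_inj.
Qed.

Lemma first_row_defectD P Q : top_right_row P -> top_right_row Q ->
  first_row_defect phi (P + Q) = first_row_defect phi P + first_row_defect phi Q.
Proof.
move=> tP tQ; pose i1 : 'I_k.+4 := inord 1; pose i2 : 'I_k.+4 := inord 2.
have i1E : i1 = 1%N :> nat by rewrite inordK.
have i2E : i2 = 2%N :> nat by rewrite inordK.
have nz_i1 : i1 != 0 by rewrite -val_eqE /= i1E.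
have nz_i2 : i2 != 0 by rewrite -val_eqE /= i2E.
have /negPf ne_i12 : i1 != i2 by rewrite -val_eqE /= i1E i2E.
pose Z := \matrix_(p, q) ((p == i1)%:R * P 0 q + (p == i2)%:R * Q 0 q).
have tZ : top_right_block Z.
  move=> p q /orP[p3|q2]; rewrite mxE; last by rewrite tP ?tQ // !mulr0 addr0.
  have /negPf -> : p != i1 by rewrite neq_ltn /= i1E (leq_trans _ p3) ?orbT.
  have /negPf -> : p != i2 by rewrite neq_ltn /= i2E p3 orbT.
  by rewrite !mul0r addr0.
have rowZ1 : row i1 Z = P.
  by apply/matrixP => a b; rewrite (ord1 a) !mxE eqxx ne_i12 mul1r mul0r addr0.
have rowZ2 : row i2 Z = Q.
  by apply/matrixP => a b; rewrite (ord1 a) !mxE eqxx eq_sym ne_i12 mul1r mul0r add0r.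
have v00 : (delta_mx 0 i1 + delta_mx 0 i2 : 'rV[F]_k.+4) 0 0 = 0.
  by rewrite mxE !delta_row0 ?addr0.
move: (PCmap_first_row_mul_top_right v00 tZ); rewrite !mulmxDl -!rowE.
rewrite !PCmap_top_right_row // rowZ1 rowZ2 addrACA -scalerDl.
exact: first_row_defect_eq.
Qed.

Lemma first_row_defect_top_right r : top_right_row r -> first_row_defect phi r = 0.
Proof.
pose good s := top_right_row s /\ first_row_defect phi s = 0.
move=> tr; suff : good (\sum_(j < k.+4) r 0 j *: delta_mx 0 j).
  by rewrite -row_sum_delta => -[].
have good0 : good 0 by split; [move=> q _; rewrite mxE | apply: first_row_defect0].
apply: big_ind => // [s t [ts ds] [tt dt]|j _].
  split; last by rewrite first_row_defectD // ds dt addr0.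
  by move=> q q2; rewrite mxE ts ?tt ?addr0.
case: (leqP j 2) => [j2|lt2j]; first by rewrite tr // scale0r.
split=> [q q2|].
  have /negPf nqj : q != j by rewrite neq_ltn (leq_ltn_trans q2 lt2j).
  by rewrite !mxE nqj andbF mulr0.
apply: first_row_defect_fixed.
by rewrite -transv0_first_row_mx phi_id // (leq_ltn_trans _ lt2j).
Qed.

End PCmapTopRight.

Lemma a_mx_first_row_mx (F : fieldType) m (u : 'rV[F]_m) :
  a_mx u = first_row_mx (row_mx (0 : 'rV_1) u).
Proof.
have l0 : lshift m (0 : 'I_1) == 0 :> 'I_(1 + m) by rewrite -val_eqE.
have r0 (i : 'I_m) : (rshift 1 i == 0 :> 'I_(1 + m)) = false by rewrite -val_eqE.
apply/matrixP => i j; rewrite first_row_mxE -[m.+1]/(1 + m)%N.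
case: (split_ordP i) => i' ->; case: (split_ordP j) => j' ->; rewrite ?(ord1 i') ?(ord1 j').
- by rewrite block_mxEul row_mxEl !mxE eqxx mulr0 addr0.
- by rewrite block_mxEur row_mxEr eq_lrshift l0 mul1r add0r.
- by rewrite block_mxEdl row_mxEl eq_rlshift r0 !mxE mulr0 addr0.
- by rewrite block_mxEdr row_mxEr eq_rshift r0 mul0r addr0 mxE.
Qed.

Lemma row_mx0_eq0 (F : fieldType) m (u : 'rV[F]_m) (q : 'I_(1 + m)) :
  (forall j : 'I_m, q = j.+1 :> nat -> u 0 j = 0) -> row_mx (0 : 'rV_1) u 0 q = 0.
Proof. by move=> uq; rewrite mxE; case: splitP => [j _|j /= /uq //]; rewrite mxE. Qed.

Lemma top_right_row_mx0 (F : fieldType) k (u : 'rV[F]_k.+3) :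
  u 0 0 = 0 -> u 0 (inord 1) = 0 -> top_right_row (row_mx (0 : 'rV_1) u).
Proof.
move=> u0 u1 q q2; apply: row_mx0_eq0 => j qj.
have j1 : (j <= 1)%N by rewrite -ltnS -qj.
have [j0|j_gt0] := posnP j; first by rewrite (_ : j = 0) //; apply: val_inj.
rewrite (_ : j = inord 1) //; apply: val_inj.
by rewrite /= inordK //; apply/eqP; rewrite eqn_leq j1.
Qed.

Theorem mainTheorem10 (F : fieldType) (k : nat) (phi : 'M[F]_(k.+4) -> 'M[F]_(k.+4)) :
  PCmap phi -> almost_identity phi ->
  exists f : 'rV[F]_(k.+3) -> F,
    (forall u : 'rV[F]_(k.+3),
        phi (a_mx u) = a_mx u *m transv ord0 ord_max (f u)) /\
    (forall u : 'rV[F]_(k.+3),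
        u 0 0 = 0 -> u 0 (inord 1) = 0 -> f u = 0).
Proof.
move=> phiPC phi_id.
have u00 (u : 'rV[F]_k.+3) : row_mx (0 : 'rV_1) u 0 0 = 0 by apply: row_mx0_eq0.
exists (fun u => first_row_defect phi (row_mx (0 : 'rV_1) u)); split=> [u|u u0 u1].
  by rewrite a_mx_first_row_mx (PCmap_first_row_mx phiPC) // first_row_mx_transv.
exact/(first_row_defect_top_right phiPC phi_id)/top_right_row_mx0.
Qed.
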